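(* For every positive integer $n$, the Alon-Tarsi number of the complete bipartite graph $K_{n,n}$ equals $1+\left\lceil \frac{n}{2}\right\rceil$.
   Context: For a graph $G$ with vertices ordered $x_1,\dots,x_N$ (treated as variables over a field of characteristic $0$), the graph polynomial is $P_G=\prod_{i<j,\ x_ix_j\in E(G)}(x_i-x_j)$. The Alon-Tarsi number of $G$ is $1+\min\max_k i_k$, where the minimum is over all monomials $x_1^{i_1}\cdots x_N^{i_N}$ with nonzero coefficient in $P_G$. *)

From mathcomp Require Import all_boot all_order all_algebra.
From mathcomp Require Import mpoly.
Set Implicit Arguments. Unset Strict Implicit. Unset Printing Implicit Defensive.
Import GRing.Theory.
Local Open Scope ring_scope.

Definition simple_graph (N : nat) (e : rel 'I_N) : Prop :=
  irreflexive e /\ ssrbool.symmetric e.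

Definition graph_poly (F : fieldType) (N : nat) (e : rel 'I_N) : {mpoly F[N]} :=
  \prod_(i < N) \prod_(j < N | (i < j)%N && e i j) ('X_i - 'X_j).

Definition mon_max (N : nat) (m : 'X_{1..N}) : nat := \max_(k < N) m k.

(* The default value of the
   min over an empty support is irrelevant since P_G <> 0 in characteristic 0. *)
Definition alon_tarsi (F : fieldType) (N : nat) (e : rel 'I_N) : nat :=
  let P := graph_poly F e in
  (1 + \big[minn/msize P]_(m <- msupp P) mon_max m)%N.

(* Complete bipartite graph K_{n,n}: vertices 'I_(n+n), the first n form one
   side, the last n the other side. *)
Definition Knn_rel (n : nat) : rel 'I_(n + n) :=
  fun i j => (i < n)%N != (j < n)%N.
Arguments Knn_rel n i j : clear implicits.

From mathcomp Require Import all_boot all_order all_algebra.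
From mathcomp Require Import mpoly.
From mathcomp Require Import zify.
Set Implicit Arguments. Unset Strict Implicit. Unset Printing Implicit Defensive.
Import GRing.Theory.

(* Expanding P = prod_(i,j) (x_i - y_j), every orientation f of the n^2 edges
   (edge (i, j) points to the vertex whose variable is picked from its factor)
   contributes the monomial of its in-degrees with sign (-1)^(number of edges
   pointing to the y side).  That number is the total degree in the y's, so it is
   determined by the monomial: terms never cancel, and in characteristic 0 the
   support of P is exactly the set of in-degree monomials.  Each has degree n^2 in
   2n variables, so its largest exponent is at least ceil(n/2); pointing (i, j) to
   y_j iff i + j mod n < ceil(n/2) attains this bound. *)

Lemma mdeg_le_mon_max N (m : 'X_{1..N}) : mdeg m <= N * mon_max m.
Proof.
rewrite mdegE -[X in _ <= X * _](card_ord N) -sum_nat_const.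
by apply: leq_sum => k _; apply: leq_bigmax.
Qed.

Lemma sum_ord_lt N u : \sum_(k < N) (k < u) = minn u N.
Proof.
rewrite -(big_mkord xpredT (fun k => nat_of_bool (k < u))).
elim: N => [|N IH]; first by rewrite big_nil minn0.
by rewrite big_nat_recr //= IH; case: (ltnP N u) => /=; lia.
Qed.

Lemma sum_addr_lt N u (i : 'I_N.+1) : \sum_(j < N.+1) ((i + j)%R < u) = minn u N.+1.
Proof. by rewrite -sum_ord_lt [RHS](reindex_inj (addrI i)). Qed.

Lemma sum_negb N (P : pred 'I_N) : \sum_(k < N) ~~ P k = N - \sum_(k < N) P k.
Proof.
rewrite -[X in _ = X - _](card_ord N) -sum1_card.
rewrite [X in _ = X - _](eq_bigr (fun k => ~~ P k + P k)) => [|k _]; last by case: (P k).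
by rewrite big_split addnK.
Qed.

Lemma bigmin_eq (I : eqType) (s : seq I) (x v : nat) (G : I -> nat) :
  v <= x -> (exists2 i, i \in s & G i <= v) -> {in s, forall i, v <= G i} ->
  \big[minn/x]_(i <- s) G i = v.
Proof.
move=> v_le_x [i0 i0s Gi0_le] v_le_G; apply/eqP; rewrite eqn_leq; apply/andP; split.
  apply: leq_trans Gi0_le; elim: s i0s {v_le_G} => // a s IH.
  rewrite in_cons big_cons => /orP[/eqP <-|/IH]; first exact: geq_minl.
  exact: leq_trans (geq_minr _ _).
by rewrite big_seq; elim/big_ind: _ => // a b va vb; rewrite leq_min va vb.
Qed.

Section Orientations.
Variables (F : fieldType) (N : nat) (T : finType) (tail head : T -> 'I_N).
Local Open Scope ring_scope.

Local Notation P := (\prod_(p : T) ('X_(tail p) - 'X_(head p)) : {mpoly F[N]}).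

Definition orient_end (f : {ffun T -> bool}) (p : T) : 'I_N :=
  if f p then head p else tail p.

Definition orient_mnm (f : {ffun T -> bool}) : 'X_{1..N} :=
  (\sum_(p : T) U_(orient_end f p))%MM.

Definition nflips (f : {ffun T -> bool}) : nat := (\sum_(p : T) f p)%N.

Lemma prod_diffX_expand :
  P = \sum_(f : {ffun T -> bool}) (-1) ^+ nflips f *: 'X_[orient_mnm f].
Proof.
rewrite (eq_bigr (fun p =>
  \sum_(c : bool) (-1) ^+ c *: 'X_(if c then head p else tail p))).
  rewrite bigA_distr_bigA /=; apply: eq_bigr => f _.
  rewrite scaler_prod prodrXr (big_morph _ (@mpolyXD _ _) (@mpolyX0 _ _)).
  by congr (_ ^+ _ *: _); apply: eq_bigr.
by move=> p _; rewrite big_bool /= expr0 expr1 scaleN1r scale1r addrC.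
Qed.

Lemma orient_mnmE f k :
  orient_mnm f k = (\sum_(p | tail p == k) ~~ f p + \sum_(p | head p == k) f p)%N.
Proof.
rewrite mnm_sumE !(big_mkcond (fun p => _ == k)) -big_split /=.
apply: eq_bigr => p _; rewrite mnm1E /orient_end.
by case: (f p); case: (tail p == k); case: (head p == k).
Qed.

Lemma mcoeff_prod_diffX m :
  P@_m = \sum_(f | orient_mnm f == m) (-1) ^+ nflips f.
Proof.
rewrite prod_diffX_expand raddf_sum [RHS]big_mkcond /=; apply: eq_bigr => f _.
by rewrite mcoeffZ mcoeffX; case: eqP; rewrite ?mulr1 ?mulr0.
Qed.

Lemma mdeg_orient_mnm f : mdeg (orient_mnm f) = #|T|.
Proof. by rewrite mdeg_sum -sum1_card; apply: eq_bigr => p _; rewrite mdeg1. Qed.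

Lemma msupp_prod_diffX m : m \in msupp P -> exists f, orient_mnm f = m.
Proof.
rewrite mcoeff_msupp mcoeff_prod_diffX.
case: (pickP (fun f => orient_mnm f == m)) => [f /eqP|none]; first by exists f.
by rewrite big_pred0 ?eqxx.
Qed.

Variable B : pred 'I_N.
Hypotheses (head_in : forall p, B (head p)) (tail_out : forall p, ~~ B (tail p)).

Lemma nflipsE f : nflips f = (\sum_(k | B k) orient_mnm f k)%N.
Proof.
under [RHS]eq_bigr do rewrite mnm_sumE.
rewrite exchange_big /=; apply: eq_bigr => p _.
rewrite /orient_end; case: (f p) => /=.
- rewrite (bigD1 (head p)) //= mnm1E eqxx big1 // => k /andP[_ neq_k].
  by rewrite mnm1E eq_sym (negbTE neq_k).
- rewrite big1 // => k Bk; rewrite mnm1E; case: eqP => // tk.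
  by have := tail_out p; rewrite tk Bk.
Qed.

Lemma mcoeff_prod_diffX_bipartite m :
  P@_m = (-1) ^+ (\sum_(k | B k) m k) * #|[pred f | orient_mnm f == m]|%:R.
Proof.
rewrite mcoeff_prod_diffX (eq_bigr (fun _ => (-1) ^+ (\sum_(k | B k) m k))).
  by rewrite sumr_const mulr_natr.
by move=> f /eqP <-; rewrite nflipsE.
Qed.

Lemma orient_mnm_msupp (charF0 : [pchar F] =i pred0) f : orient_mnm f \in msupp P.
Proof.
move/pcharf0P: charF0 => charF0.
rewrite mcoeff_msupp mcoeff_prod_diffX_bipartite mulf_neq0 //.
  by rewrite expf_neq0 // oppr_eq0 oner_eq0.
by rewrite charF0 -lt0n; apply/card_gt0P; exists f; rewrite inE /=.
Qed.

End Orientations.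

Lemma graph_poly_Knn (F : fieldType) n :
  graph_poly F (Knn_rel n) =
  (\prod_(p : 'I_n * 'I_n) ('X_(lshift n p.1) - 'X_(rshift n p.2)))%R.
Proof.
have lshift_lt (a : 'I_n) : lshift n a < n by rewrite /= ltn_ord.
have rshift_ge (b : 'I_n) : (rshift n b < n) = false by rewrite /= ltnNge leq_addr.
rewrite /graph_poly big_split_ord /= [X in (_ * X)%R]big1 ?mulr1 => [|b _]; last first.
  rewrite big_split_ord /= !big1 ?mulr1 // => c /andP[lt_bc].
    by rewrite /Knn_rel !rshift_ge.
  by move: lt_bc; rewrite /= ltnNge (leq_trans (ltnW (ltn_ord c)) (leq_addr _ _)).
rewrite -(pair_big xpredT xpredT (fun a b => 'X_(lshift n a) - 'X_(rshift n b))%R) /=.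
apply: eq_bigr => a _; rewrite big_split_ord /= big1 ?mul1r => [|c /andP[_]]; last first.
  by rewrite /Knn_rel !lshift_lt.
apply: eq_bigl => c; rewrite /Knn_rel lshift_lt rshift_ge /=.
by rewrite (leq_trans (ltn_ord a) (leq_addr _ _)).
Qed.

Local Notation Knn_tail n := (fun p : 'I_n * 'I_n => lshift n p.1).
Local Notation Knn_head n := (fun p : 'I_n * 'I_n => rshift n p.2).

Section CompleteBipartite.
Variable n : nat.
Local Notation tail := (Knn_tail n).
Local Notation head := (Knn_head n).

Lemma orient_mnm_lshift f i :
  orient_mnm tail head f (lshift n i) = \sum_(j < n) ~~ f (i, j).
Proof.
rewrite orient_mnmE [X in _ + X]big_pred0 => [|p]; last by rewrite /= eq_shift.
rewrite addn0 -(@big_pred1_eq _ 0 addn _ i (fun a => \sum_(j < n) ~~ f (a, j))).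
rewrite pair_big_dep /=.
by apply: eq_big => [[a b]|[a b] _] /=; rewrite ?eq_shift ?andbT.
Qed.

Lemma orient_mnm_rshift f j :
  orient_mnm tail head f (rshift n j) = \sum_(i < n) f (i, j).
Proof.
rewrite orient_mnmE [X in X + _]big_pred0 => [|p]; last by rewrite /= eq_shift.
rewrite add0n -(@big_pred1_eq _ 0 addn _ j (fun b => \sum_(i < n) f (i, b))).
rewrite exchange_big pair_big_dep /=.
by apply: eq_big => [[a b]|[a b] _] /=; rewrite ?eq_shift.
Qed.

Lemma msupp_Knn_mdeg (F : fieldType) m :
  m \in msupp (graph_poly F (Knn_rel n)) -> mdeg m = n * n.
Proof.
rewrite graph_poly_Knn => /msupp_prod_diffX[f <-].
by rewrite mdeg_orient_mnm card_prod card_ord.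
Qed.

Lemma orient_mnm_msupp_Knn (F : fieldType) (charF0 : [pchar F]%R =i pred0) f :
  orient_mnm tail head f \in msupp (graph_poly F (Knn_rel n)).
Proof.
rewrite graph_poly_Knn.
apply: (@orient_mnm_msupp F _ _ tail head (fun k => n <= k)) => // p /=.
  exact: leq_addr.
by rewrite -ltnNge ltn_ord.
Qed.

Lemma uphalf_le_mon_max_Knn (F : fieldType) m :
  0 < n -> m \in msupp (graph_poly F (Knn_rel n)) -> uphalf n <= mon_max m.
Proof.
move=> n_gt0 /msupp_Knn_mdeg mdeg_m; rewrite leq_uphalf_double -(leq_pmul2l n_gt0).
by rewrite -mul2n mulnA muln2 -addnn -mdeg_m mdeg_le_mon_max.
Qed.

End CompleteBipartite.

Definition band_orientation n u : {ffun 'I_n.+1 * 'I_n.+1 -> bool} :=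
  [ffun p : 'I_n.+1 * 'I_n.+1 => (p.1 + p.2)%R < u].

Lemma mon_max_band_orientation n :
  mon_max (orient_mnm (Knn_tail n.+1) (Knn_head n.+1)
                      (band_orientation n (uphalf n.+1))) <= uphalf n.+1.
Proof.
apply/bigmax_leqP => k _; case: (split_ordP k) => [i|j] ->.
- rewrite orient_mnm_lshift sum_negb.
  under eq_bigr do rewrite ffunE.
  by rewrite sum_addr_lt uphalfE; lia.
- rewrite orient_mnm_rshift.
  under eq_bigr do rewrite ffunE addrC.
  by rewrite sum_addr_lt geq_minl.
Qed.

Theorem mainTheorem3 (F : fieldType) (charF0 : [pchar F]%R =i pred0) (n : nat) :
  (0 < n)%N ->
  alon_tarsi F (Knn_rel n) = (1 + uphalf n)%N.
Proof.
case: n => [|n] // _; rewrite /alon_tarsi; congr (1 + _)%N.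
set band := orient_mnm (Knn_tail n.+1) (Knn_head n.+1) (band_orientation n (uphalf n.+1)).
have band_supp : band \in msupp (graph_poly F (Knn_rel n.+1)).
  exact: orient_mnm_msupp_Knn.
apply: bigmin_eq; last by move=> m; apply: uphalf_le_mon_max_Knn.
- apply: leq_trans (msize_mdeg_lt band_supp); rewrite (msupp_Knn_mdeg band_supp).
  by rewrite uphalfE; nia.
- by exists band; last exact: mon_max_band_orientation.
Qed.
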